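(* Let $X$ be a countable set and $\mathcal{A}\subseteq\mathcal{P}_\infty(X)$ hereditary. The following are equivalent: (i) $\mathcal{A}$ is an M-family; (ii) for every decreasing sequence $(D_n)_n$ in $\mathrm{co}(\mathcal{A})$ there is $A\in\mathcal{A}$ with $A\setminus D_n$ finite for every $n$; (iii) for every sequence $(A_n)_n$ in $\mathcal{A}$ there is $A\in\mathcal{A}$ with $A\cap A_n\neq\varnothing$ for infinitely many $n$.
   Context: $\mathcal{P}_\infty(X)$: infinite subsets of $X$. Hereditary: $A\in\mathcal{A}$, $A'\subseteq A$ infinite imply $A'\in\mathcal{A}$. An M-family is a hereditary family $\mathcal{A}$ such that for every sequence $(A_n)_n$ in $\mathcal{A}$ there is $A\in\mathcal{A}$ with $A\setminus\bigcup_{i\ge n}A_i$ finite for every $n$. $\mathrm{co}(\mathcal{A})=\{B\in\mathcal{P}_\infty(X):\exists A\in\mathcal{A},\ B\cap A\text{ infinite}\}$. *)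

From Stdlib Require Import List.

Definition finite_set {X : Type} (S : X -> Prop) : Prop :=
  exists l : list X, forall x, S x -> In x l.

Definition infinite_set {X : Type} (S : X -> Prop) : Prop := ~ finite_set S.

Definition countable_type (X : Type) : Prop :=
  exists f : X -> nat, forall x y, f x = f y -> x = y.

Definition subset {X : Type} (A B : X -> Prop) : Prop := forall x, A x -> B x.

Definition family_in_Pinf {X : Type} (F : (X -> Prop) -> Prop) : Prop :=
  forall A, F A -> infinite_set A.

Definition hereditary {X : Type} (F : (X -> Prop) -> Prop) : Prop :=
  forall A A', F A -> subset A' A -> infinite_set A' -> F A'.

Definition tail_union {X : Type} (As : nat -> X -> Prop) (n : nat) : X -> Prop :=
  fun x => exists i, n <= i /\ As i x.

Definition M_family {X : Type} (F : (X -> Prop) -> Prop) : Prop :=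
  hereditary F /\
  forall As : nat -> X -> Prop, (forall n, F (As n)) ->
    exists A, F A /\ forall n, finite_set (fun x => A x /\ ~ tail_union As n x).

Definition co {X : Type} (F : (X -> Prop) -> Prop) : (X -> Prop) -> Prop :=
  fun B => infinite_set B /\ exists A, F A /\ infinite_set (fun x => B x /\ A x).

From Stdlib Require Import List Arith Lia Classical ClassicalEpsilon.

(* The four implications are proved separately:
   - (i) -> (ii): given decreasing D_n in co(F), pick A_n in F with
     A_n ∩ D_n infinite; the sets A_n ∩ D_n lie in F by heredity, and any
     pseudo-intersection of their tails is almost contained in every D_n,
     because the tail union beyond n lies in D_n.
   - (ii) -> (i): the tail unions of a sequence in F form a decreasing
     sequence in co(F).
   - (i) -> (iii): an infinite A almost contained in every tail union must
     meet every tail union.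
   - (iii) -> (i) is the heart: with an injection f : X -> nat, shrink A_n
     to B_n = {x ∈ A_n | f x >= n} (still in F), take A ∈ F meeting infinitely
     many B_n and choose x_N ∈ A in the tail union of the B_n beyond N.  Since
     f x_N >= N the set {x_N} is infinite, hence in F, and by construction
     it is almost contained in every tail union of the A_n. *)

Lemma finite_subset {X : Type} (A B : X -> Prop) :
  subset A B -> finite_set B -> finite_set A.
Proof. intros HAB [l Hl]. exists l. auto. Qed.

Lemma infinite_superset {X : Type} (A B : X -> Prop) :
  subset A B -> infinite_set A -> infinite_set B.
Proof. intros HAB HA HB. apply HA. exact (finite_subset A B HAB HB). Qed.

Lemma infinite_minus_finite {X : Type} (A S : X -> Prop) :
  infinite_set A -> finite_set S -> infinite_set (fun x => A x /\ ~ S x).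
Proof.
  intros HA [lS HS] [lD HD]. apply HA. exists (lD ++ lS). intros x Ax.
  apply in_or_app. destruct (classic (S x)); auto.
Qed.

Lemma infinite_almost_contained_meets {X : Type} (A S : X -> Prop) :
  infinite_set A -> finite_set (fun x => A x /\ ~ S x) -> exists x, A x /\ S x.
Proof.
  intros HA HAS. apply NNPP. intros Hno. apply HA.
  apply (finite_subset _ _ (fun x Ax => conj Ax (fun Sx => Hno (ex_intro _ x (conj Ax Sx))))).
  exact HAS.
Qed.

Lemma injection_initial_segment_finite {X : Type} (f : X -> nat) :
  (forall x y, f x = f y -> x = y) -> forall n, finite_set (fun x => f x < n).
Proof.
  intros Hf n. induction n as [|n [l Hl]].
  - exists nil. intros x Hx. lia.
  - destruct (classic (exists y, f y = n)) as [[y Hy]|Hnone].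
    + exists (y :: l). intros x Hx. destruct (Nat.eq_dec (f x) n) as [E|E].
      * left. apply Hf. congruence.
      * right. apply Hl. lia.
    + exists l. intros x Hx. apply Hl. destruct (Nat.eq_dec (f x) n) as [E|E].
      * exfalso. eauto.
      * lia.
Qed.

Lemma list_bounded {X : Type} (f : X -> nat) (l : list X) :
  exists M, forall y, In y l -> f y < M.
Proof.
  induction l as [|a l [M HM]].
  - exists 0. intros y [].
  - exists (S (Nat.max M (f a))). intros y [<-|Hy].
    + lia.
    + specialize (HM y Hy). lia.
Qed.

Lemma unbounded_sequence_range_infinite {X : Type} (f : X -> nat) (xs : nat -> X) :
  (forall N, N <= f (xs N)) -> infinite_set (fun x => exists N, x = xs N).
Proof.
  intros Hxs [l Hl]. destruct (list_bounded f l) as [M HM].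
  specialize (HM (xs M) (Hl _ (ex_intro _ M eq_refl))).
  specialize (Hxs M). lia.
Qed.

Lemma decreasing_antitone {X : Type} (D : nat -> X -> Prop) :
  (forall n, subset (D (S n)) (D n)) -> forall n i, n <= i -> subset (D i) (D n).
Proof.
  intros Hdec n i Hi. induction Hi as [|i Hi IH].
  - intros x h. exact h.
  - intros x h. apply IH, Hdec, h.
Qed.

Lemma tail_union_decreasing {X : Type} (D : nat -> X -> Prop) :
  (forall n, subset (D (S n)) (D n)) -> forall n, subset (tail_union D n) (D n).
Proof.
  intros Hdec n x [i [Hi Dx]]. exact (decreasing_antitone D Hdec n i Hi x Dx).
Qed.

Lemma tail_union_antitone {X : Type} (As : nat -> X -> Prop) :
  forall n, subset (tail_union As (S n)) (tail_union As n).
Proof. intros n x [i [Hi h]]. exists i. split; [lia | exact h]. Qed.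

Lemma meets_infinitely_often_iff {X : Type} (A : X -> Prop) (As : nat -> X -> Prop) :
  (forall N, exists n, N <= n /\ exists x, A x /\ As n x) <->
  (forall N, exists x, A x /\ tail_union As N x).
Proof.
  split.
  - intros H N. destruct (H N) as [n [Hn [x [Ax Anx]]]]. exists x. split; [exact Ax|].
    exists n. auto.
  - intros H N. destruct (H N) as [x [Ax [n [Hn Anx]]]]. exists n. split; [exact Hn|].
    exists x. auto.
Qed.

(* If x_N lies in the tail union beyond N, the range of (x_N) is almost
   contained in every tail union: only x_0, ..., x_(m-1) may escape the m-th. *)
Lemma diagonal_range_almost_in_tails {X : Type} (As : nat -> X -> Prop) (xs : nat -> X) :
  (forall N, tail_union As N (xs N)) ->
  forall m, finite_set (fun x => (exists N, x = xs N) /\ ~ tail_union As m x).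
Proof.
  intros Hxs m. exists (map xs (seq 0 m)). intros x [[N ->] Hout].
  apply in_map, in_seq. destruct (Nat.lt_ge_cases N m) as [Hlt|Hge]; [lia|].
  exfalso. apply Hout. destruct (Hxs N) as [n [Hn h]]. exists n. split; [lia | exact h].
Qed.

Section Characterisations.

Variable X : Type.
Variable F : (X -> Prop) -> Prop.
Hypothesis F_infinite : family_in_Pinf F.
Hypothesis F_hereditary : hereditary F.

Definition decreasing_co_property : Prop :=
  forall D : nat -> X -> Prop,
    (forall n, co F (D n)) -> (forall n, subset (D (S n)) (D n)) ->
    exists A, F A /\ forall n, finite_set (fun x => A x /\ ~ D n x).

Definition meeting_property : Prop :=
  forall As : nat -> X -> Prop, (forall n, F (As n)) ->
    exists A, F A /\ forall N, exists n, N <= n /\ exists x, A x /\ As n x.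

Lemma M_family_decreasing_co : M_family F -> decreasing_co_property.
Proof.
  intros [_ HM] D HD Hdec.
  assert (Hwit : forall n, { A | F A /\ infinite_set (fun x => D n x /\ A x) }).
  { intro n. apply constructive_indefinite_description. exact (proj2 (HD n)). }
  set (As := fun n x => D n x /\ proj1_sig (Hwit n) x).
  assert (HAs : forall n, F (As n)).
  { intro n. destruct (proj2_sig (Hwit n)) as [FA Hinf].
    exact (F_hereditary _ _ FA (fun x h => proj2 h) Hinf). }
  destruct (HM As HAs) as [A [FA HA]]. exists A. split; [exact FA|].
  intro n. apply (finite_subset _ (fun x => A x /\ ~ tail_union As n x)); [|exact (HA n)].
  intros x [Ax Dx]. split; [exact Ax|]. intros T. apply Dx.
  apply (tail_union_decreasing D Hdec n).
  destruct T as [i [Hi [Di _]]]. exists i. auto.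
Qed.

Lemma decreasing_co_M_family : decreasing_co_property -> M_family F.
Proof.
  intros H. split; [exact F_hereditary|]. intros As HAs.
  apply (H (tail_union As)); [|exact (tail_union_antitone As)].
  intro n. assert (Hsub : subset (As n) (tail_union As n)) by (intros x h; exists n; auto).
  split.
  - exact (infinite_superset _ _ Hsub (F_infinite _ (HAs n))).
  - exists (As n). split; [exact (HAs n)|].
    apply (infinite_superset (As n)); [|exact (F_infinite _ (HAs n))].
    intros x h. split; [exact (Hsub x h) | exact h].
Qed.

Lemma M_family_meeting : M_family F -> meeting_property.
Proof.
  intros [_ HM] As HAs. destruct (HM As HAs) as [A [FA HA]].
  exists A. split; [exact FA|]. apply meets_infinitely_often_iff. intro N.
  exact (infinite_almost_contained_meets A _ (F_infinite _ FA) (HA N)).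
Qed.

Lemma truncation_in_F (f : X -> nat) :
  (forall x y, f x = f y -> x = y) ->
  forall A n, F A -> F (fun x => A x /\ n <= f x).
Proof.
  intros Hf A n FA. apply (F_hereditary _ _ FA (fun x h => proj1 h)).
  apply (infinite_superset (fun x => A x /\ ~ f x < n)).
  - intros x [h1 h2]. split; [exact h1 | lia].
  - exact (infinite_minus_finite _ _ (F_infinite _ FA)
             (injection_initial_segment_finite f Hf n)).
Qed.

Lemma meeting_M_family : countable_type X -> meeting_property -> M_family F.
Proof.
  intros [f Hf] H. split; [exact F_hereditary|]. intros As HAs.
  set (B := fun n x => As n x /\ n <= f x).
  destruct (H B (fun n => truncation_in_F f Hf (As n) n (HAs n))) as [A [FA HA]].
  pose proof (proj1 (meets_infinitely_often_iff A B) HA) as HAtail.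
  assert (Hchoice : forall N, { x | A x /\ tail_union B N x }).
  { intro N. apply constructive_indefinite_description, HAtail. }
  set (xs := fun N => proj1_sig (Hchoice N)).
  assert (Hxs : forall N, A (xs N) /\ tail_union B N (xs N)).
  { intro N. exact (proj2_sig (Hchoice N)). }
  assert (Hf_xs : forall N, N <= f (xs N)).
  { intro N. destruct (proj2 (Hxs N)) as [n [Hn [_ Hfn]]]. lia. }
  exists (fun x => exists N, x = xs N). split.
  - apply (F_hereditary _ _ FA); [intros x [N ->]; apply Hxs|].
    exact (unbounded_sequence_range_infinite f xs Hf_xs).
  - apply diagonal_range_almost_in_tails. intro N.
    destruct (proj2 (Hxs N)) as [n [Hn [Hx _]]]. exists n. auto.
Qed.

End Characterisations.

Theorem fact3 (X : Type) (F : (X -> Prop) -> Prop)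
  (hX : countable_type X) (hF : family_in_Pinf F) (hher : hereditary F) :
  (M_family F <->
   (forall D : nat -> X -> Prop,
      (forall n, co F (D n)) -> (forall n, subset (D (S n)) (D n)) ->
      exists A, F A /\ forall n, finite_set (fun x => A x /\ ~ D n x)))
  /\
  (M_family F <->
   (forall As : nat -> X -> Prop, (forall n, F (As n)) ->
      exists A, F A /\
        forall N, exists n, N <= n /\ exists x, A x /\ As n x)).
Proof.
  split; split.
  - exact (M_family_decreasing_co X F hher).
  - exact (decreasing_co_M_family X F hF hher).
  - exact (M_family_meeting X F hF).
  - exact (meeting_M_family X F hF hher hX).
Qed.
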